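(* Let $a\in[0,\infty)$ and let $\theta:[0,1]\to[0,\infty]$ be a continuous and strictly decreasing function such that (1) $\theta(x)=\infty$ if and only if $x=0$, and (2) $\theta(x)=\frac{a}{2}$ if and only if $x=1$. Let $\vartheta:[0,\infty]\to[0,1]$ be given by $\vartheta(x)=(\theta+\frac{a}{2})^{(-1)}(x)$ for all $x\in[0,\infty]$. Then the function $O_{\theta,\vartheta}:[0,1]^2\to[0,1]$, $O_{\theta,\vartheta}(x,y)=\vartheta(\theta(x)+\theta(y))$, is a positive t-norm.
   Context: Arithmetic in $[0,\infty]$ uses $c+\infty=\infty$. The function $\theta+\frac{a}{2}:[0,1]\to[0,\infty]$ is $x\mapsto\theta(x)+\frac a2$. For a decreasing function $f:[0,1]\to[0,\infty]$, its pseudo-inverse $f^{(-1)}:[0,\infty]\to[0,1]$ is $f^{(-1)}(y)=\sup\{x\in[0,1]\mid f(x)>y\}$ (with $\sup\emptyset=0$). A t-norm is a commutative, associative map $T:[0,1]^2\to[0,1]$, increasing in each variable, with $T(x,1)=x$ for all $x$; it is positive if $T(x,y)=0$ implies $x=0$ or $y=0$. *)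

From mathcomp Require Import all_boot all_order all_algebra.
From mathcomp Require Import all_classical all_reals all_analysis.
Set Implicit Arguments. Unset Strict Implicit. Unset Printing Implicit Defensive.
Import Order.TTheory GRing.Theory Num.Theory.
Local Open Scope classical_set_scope.
Local Open Scope ring_scope.

(* Pseudo-inverse of a (decreasing) function f : [0,1] -> [0,oo]:
   f^(-1)(y) = sup {x in [0,1] | f x > y}, with sup of the empty set = 0
   (MathComp's [sup] satisfies [sup set0 = 0], lemma [sup0]). *)
Definition pseudo_inv {R : realType} (f : R -> \bar R) (y : \bar R) : R :=
  sup [set x : R | x \in `[0, 1] /\ (y < f x)%E].

Definition is_tnorm {R : realType} (T : R -> R -> R) : Prop :=
  (forall x y, x \in `[0, 1] -> y \in `[0, 1] -> T x y \in `[0, 1]) /\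
  [/\      (forall x y, x \in `[0, 1] -> y \in `[0, 1] -> T x y = T y x),
      (forall x y z, x \in `[0, 1] -> y \in `[0, 1] -> z \in `[0, 1] ->
          T x (T y z) = T (T x y) z),
      (forall x x' y, x \in `[0, 1] -> x' \in `[0, 1] -> y \in `[0, 1] ->
          x <= x' -> T x y <= T x' y),
      (forall x y y', x \in `[0, 1] -> y \in `[0, 1] -> y' \in `[0, 1] ->
          y <= y' -> T x y <= T x y') &
      (forall x, x \in `[0, 1] -> T x 1 = x)].

Definition is_positive_tnorm {R : realType} (T : R -> R -> R) : Prop :=
  is_tnorm T /\
  (forall x y, x \in `[0, 1] -> y \in `[0, 1] -> T x y = 0 -> x = 0 \/ y = 0).

(* theta + a/2 is a continuous, strictly decreasing bijection from [0,1] onto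
   [a, +oo], and vartheta inverts it there.  Since theta >= a/2, every sum
   theta x + theta y lies in this range, so O(x,y) is the unique point with
   theta (O(x,y)) + a/2 = theta x + theta y.  The t-norm laws are transported
   through this equation: associativity from that of +, monotonicity from the
   antitonicity of theta, neutrality of 1 from theta 1 = a/2, and positivity
   because theta x + theta y is finite unless x = 0 or y = 0. *)

From mathcomp Require Import all_boot all_order all_algebra.
From mathcomp Require Import all_classical all_reals all_analysis.
Import Order.TTheory GRing.Theory Num.Theory.
Import numFieldNormedType.Exports.
Local Open Scope classical_set_scope.
Local Open Scope ring_scope.

Lemma addIe (R : numDomainType) (k : \bar R) :
  k \is a fin_num -> injective (fun t => t + k)%E.
Proof. by move=> k_fin t u /(congr1 (fun v => v - k)%E); rewrite !addeK. Qed.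

Lemma pseudo_inv_cancel {R : realType} (f : R -> \bar R) (c : R) :
  {in `[0, 1] &, {homo f : x y /~ (x < y)%O}} -> c \in `[0, 1] ->
  pseudo_inv f (f c) = c.
Proof.
move=> f_decr c01; rewrite /pseudo_inv.
have f_lt := leW_nmono_in (le_nmono_in f_decr).
have -> : [set x | x \in `[0, 1] /\ (f c < f x)%E] = [set` `[0, c[].
  apply/seteqP; split=> x /=.
    move=> [x01]; rewrite f_lt // in_itv /= => ->.
    by move: x01; rewrite in_itv /= => /andP[-> _].
  rewrite in_itv /= => /andP[x0 xc].
  have x01 : x \in `[0, 1].
    by move: c01; rewrite !in_itv /= x0 => /andP[_]; apply/le_trans/ltW.
  by rewrite f_lt.
move: c01; rewrite in_itv /= => /andP[].
rewrite le_eqVlt => /orP[/eqP<- _|c0 _].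
  by rewrite set_itv_ge ?sup0 // ltxx.
by apply: sup_itv; rewrite bnd_simp.
Qed.

Section ThetaTnorm.
Variables (R : realType) (a : R) (theta : R -> \bar R).
Hypothesis theta_cont : {within `[0, 1], continuous theta}.
Hypothesis theta_decr :
  forall x y, x \in `[0, 1] -> y \in `[0, 1] -> x < y -> (theta y < theta x)%E.
Hypothesis theta_eqy : forall x, x \in `[0, 1] -> (theta x = +oo)%E <-> x = 0.
Hypothesis theta_eq_half :
  forall x, x \in `[0, 1] -> (theta x = (a / 2)%:E)%E <-> x = 1.

Definition theta_shift (x : R) : \bar R := (theta x + (a / 2)%:E)%E.

Definition otheta (x y : R) : R := pseudo_inv theta_shift (theta x + theta y)%E.

Let in01_0 : (0 : R) \in `[0, 1]. Proof. by rewrite in_itv /= lexx ler01. Qed.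
Let in01_1 : (1 : R) \in `[0, 1]. Proof. by rewrite in_itv /= lexx ler01. Qed.

Let theta_le_mono : {in `[0, 1] &, {mono theta : x y /~ (x <= y)%O}}.
Proof. by apply: le_nmono_in => x y x01 y01; apply: theta_decr. Qed.

Lemma theta0 : theta 0 = +oo%E. Proof. exact/theta_eqy. Qed.
Lemma theta1 : theta 1 = (a / 2)%:E. Proof. exact/theta_eq_half. Qed.

Lemma theta_ge_half {x} : x \in `[0, 1] -> ((a / 2)%:E <= theta x)%E.
Proof.
move=> x01; rewrite -theta1 theta_le_mono //.
by move: x01; rewrite in_itv /= => /andP[].
Qed.

Lemma theta_gtNy {x} : x \in `[0, 1] -> (-oo < theta x)%E.
Proof. by move=> x01; rewrite (lt_le_trans _ (theta_ge_half x01)) ?ltNyr. Qed.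

Lemma theta_fin_num {x} : x \in `[0, 1] -> x != 0 -> theta x \is a fin_num.
Proof.
move=> x01 x0; rewrite fin_numE gt_eqF ?theta_gtNy //=.
by apply/eqP => /(theta_eqy _ x01)/eqP; rewrite (negbTE x0).
Qed.

Lemma theta_shift_decr :
  {in `[0, 1] &, {homo theta_shift : x y /~ (x < y)%O}}.
Proof.
by move=> x y x01 y01 xy; rewrite /theta_shift lteD2rE //; apply: theta_decr.
Qed.

Let theta_shift_le_mono :
  {in `[0, 1] &, {mono theta_shift : x y /~ (x <= y)%O}}.
Proof. exact: le_nmono_in theta_shift_decr. Qed.

Let theta_shift_inj : {in `[0, 1] &, injective theta_shift}.
Proof. exact: dec_inj_in theta_shift_le_mono. Qed.

Lemma pseudo_inv_theta_shift c :
  c \in `[0, 1] -> pseudo_inv theta_shift (theta_shift c) = c.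
Proof. exact: pseudo_inv_cancel theta_shift_decr. Qed.

Lemma theta_gt_near0 s : exists2 e, e \in `]0, 1] & (s%:E < theta e)%E.
Proof.
have := (subspace_continuousP _ _).1 theta_cont 0 in01_0.
rewrite /from_subspace theta0 => /cvgeyPgt/(_ s).
rewrite near_withinE => /nbhs_ballP[d /= d0 near0_gt].
have e0 : 0 < Num.min (d / 2) 1 by rewrite lt_min ltr01 andbT divr_gt0.
exists (Num.min (d / 2) 1); first by rewrite in_itv /= e0 ge_min lexx orbT.
apply: near0_gt; last by rewrite in_itv /= ge_min lexx orbT andbT ltW.
rewrite /ball /= sub0r normrN ger0_norm ?ltW //.
by rewrite gt_min ltr_pdivrMr // ltr_pMr // ltr1n.
Qed.

Lemma fine_theta_continuous e : 0 < e ->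
  {within `[e, 1], continuous (fine \o theta)}.
Proof.
move=> e0; have sub01 : `[e, 1] `<=` `[0, 1].
  move=> z /=; rewrite !in_itv /= => /andP[ez ->].
  by rewrite (le_trans (ltW e0)).
apply/(@subspace_continuousP R) => z ze1.
have z01 := sub01 z ze1.
have z0 : z != 0.
  move: ze1; rewrite /= in_itv /= => /andP[ez _].
  by rewrite gt_eqF // (lt_le_trans e0).
have theta_cont_e1 := continuous_subspaceW sub01 theta_cont.
have := (subspace_continuousP _ _).1 theta_cont_e1 z ze1.
by rewrite /from_subspace -(fineK (theta_fin_num z01 z0)) => /fine_cvg.
Qed.

Lemma theta_onto {s} : a / 2 <= s -> exists2 c, c \in `[0, 1] & theta c = s%:E.
Proof.
move=> s_ge; have [e] := theta_gt_near0 s.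
rewrite in_itv /= => /andP[e0 e1] s_lt.
have [c] : exists2 c, c \in `[e, 1] & fine (theta c) = s.
  apply: IVT => //; first exact: fine_theta_continuous.
  rewrite ge_min le_max theta1 /= s_ge orbT /=; apply/orP; left.
  have e01 : e \in `[0, 1] by rewrite in_itv /= e1 ltW.
  by rewrite -lee_fin fineK ?ltW // theta_fin_num // gt_eqF.
rewrite in_itv /= => /andP[ec c1] <-.
have c0 : 0 < c := lt_le_trans e0 ec.
have c01 : c \in `[0, 1] by rewrite in_itv /= ltW.
by exists c; rewrite // fineK // theta_fin_num // gt_eqF.
Qed.

Lemma theta_shift_onto_sum {x y} : x \in `[0, 1] -> y \in `[0, 1] ->
  exists2 c, c \in `[0, 1] & theta_shift c = (theta x + theta y)%E.
Proof.
move=> x01 y01; rewrite /theta_shift.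
have [->|x0] := eqVneq x 0.
  by exists 0; rewrite // theta0 !addye // gt_eqF // theta_gtNy.
have [->|y0] := eqVneq y 0.
  by exists 0; rewrite // theta0 addye // addey // gt_eqF // theta_gtNy.
move: (theta_ge_half x01) (theta_ge_half y01).
rewrite -(fineK (theta_fin_num x01 x0)) -(fineK (theta_fin_num y01 y0)).
move: (fine (theta x)) (fine (theta y)) => tx ty; rewrite !lee_fin => hx hy.
have s_ge : a / 2 <= tx + ty - a / 2.
  by rewrite (le_trans hx) // -addrA lerDl subr_ge0.
have [c c01 theta_c] := theta_onto s_ge.
by exists c; rewrite // theta_c -EFinD subrK.
Qed.

Lemma otheta_in01 x y :
  x \in `[0, 1] -> y \in `[0, 1] -> otheta x y \in `[0, 1].
Proof.
move=> x01 y01; rewrite /otheta.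
have [c c01 <-] := theta_shift_onto_sum x01 y01.
by rewrite pseudo_inv_theta_shift.
Qed.

Lemma theta_shift_otheta {x y} : x \in `[0, 1] -> y \in `[0, 1] ->
  theta_shift (otheta x y) = (theta x + theta y)%E.
Proof.
move=> x01 y01; rewrite /otheta.
have [c c01 <-] := theta_shift_onto_sum x01 y01.
by rewrite pseudo_inv_theta_shift.
Qed.

Lemma othetaC x y : otheta x y = otheta y x.
Proof. by rewrite /otheta addeC. Qed.

Lemma theta_shift_otheta3 x y z :
  x \in `[0, 1] -> y \in `[0, 1] -> z \in `[0, 1] ->
  (theta_shift (otheta x (otheta y z)) + (a / 2)%:E =
   theta x + (theta y + theta z))%E.
Proof.
move=> x01 y01 z01.
rewrite theta_shift_otheta ?otheta_in01 // -addeA.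
by congr (_ + _)%E; apply: theta_shift_otheta.
Qed.

Lemma othetaA x y z : x \in `[0, 1] -> y \in `[0, 1] -> z \in `[0, 1] ->
  otheta x (otheta y z) = otheta (otheta x y) z.
Proof.
move=> x01 y01 z01; rewrite [RHS]othetaC.
apply: theta_shift_inj; rewrite ?otheta_in01 //.
apply: (@addIe _ (a / 2)%:E) => //=.
by rewrite !theta_shift_otheta3 // addeA addeC.
Qed.

Lemma otheta_homo_l x x' y : x \in `[0, 1] -> x' \in `[0, 1] -> y \in `[0, 1] ->
  x <= x' -> otheta x y <= otheta x' y.
Proof.
move=> x01 x'01 y01 xx'.
rewrite -theta_shift_le_mono ?otheta_in01 // !theta_shift_otheta //.
by apply: leeD2r; rewrite theta_le_mono.
Qed.

Lemma otheta_x1 x : x \in `[0, 1] -> otheta x 1 = x.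
Proof.
by move=> x01; rewrite /otheta theta1 -/(theta_shift x) pseudo_inv_theta_shift.
Qed.

Lemma otheta_eq0 x y : x \in `[0, 1] -> y \in `[0, 1] ->
  otheta x y = 0 -> x = 0 \/ y = 0.
Proof.
move=> x01 y01 Oxy0; have := theta_shift_otheta x01 y01.
rewrite Oxy0 /theta_shift theta0 addye //.
have [->|x0] := eqVneq x 0; first by left.
have [->|y0] := eqVneq y 0; first by right.
move/(congr1 (fun t => t \is a fin_num)).
by rewrite fin_numD !theta_fin_num.
Qed.

Lemma otheta_positive_tnorm : is_positive_tnorm otheta.
Proof.
split; last exact: otheta_eq0.
split; first exact: otheta_in01.
split.
- by move=> x y _ _; apply: othetaC.
- exact: othetaA.
- exact: otheta_homo_l.
- move=> x y y' x01 y01 y'01 yy'.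
  by rewrite !(othetaC x); apply: otheta_homo_l.
- exact: otheta_x1.
Qed.

End ThetaTnorm.

Theorem proposition4p2 (R : realType) (a : R) (theta : R -> \bar R) :
  0 <= a ->
  {within `[0, 1], continuous theta} ->
  (forall x, x \in `[0, 1] -> (0 <= theta x)%E) ->
  (forall x y, x \in `[0, 1] -> y \in `[0, 1] -> x < y -> (theta y < theta x)%E) ->
  (forall x, x \in `[0, 1] -> (theta x = +oo)%E <-> x = 0) ->
  (forall x, x \in `[0, 1] -> (theta x = (a / 2)%:E)%E <-> x = 1) ->
  let vartheta := pseudo_inv (fun x => (theta x + (a / 2)%:E)%E) in
  is_positive_tnorm (fun x y => vartheta (theta x + theta y)%E).
Proof.
move=> _ theta_cont _ theta_decr theta_eqy theta_eq_half vartheta.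
exact: otheta_positive_tnorm.
Qed.
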